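(* Let $C$ be a parity complex in which every cell $(M',P')$ has $M'$ and $P'$ receptive. Let $m,n\in\mathbb N$, let $(M,P)$ be an $n$-cell, and let $X\subseteq C_{n+1}$ be a well-formed set with exactly $m$ elements such that $X^\pm\subseteq M_n$. Put $Y=(M_n\cup X^-)\setminus X^+$. Then: (B) $(M^{n-1}\cup Y,\ P^{n-1}\cup Y)$ is a cell and $X^-\cap M_n=\emptyset$; (C) $(M^{n-1}\cup Y\cup X,\ P\cup X)$ is a cell.
   Context: A parity complex consists of a set $C=\bigsqcup_{n\ge 0}C_n$ graded by dimension, together with, for each $n\ge 0$ and each $x\in C_{n+1}$, two disjoint, non-empty, finite subsets $x^-,x^+\subseteq C_n$ (for $x\in C_0$ put $x^-=x^+=\emptyset$), subject to Axioms 1, 2, 3A, 3B below. Notation: for $S\subseteq C$, $S^-=\bigcup_{w\in S}w^-$, $S^+=\bigcup_{w\in S}w^+$, $S^\mp=S^-\setminus S^+$, $S^\pm=S^+\setminus S^-$; $x^{-+}=(x^-)^+$, etc.; $S_n=S\cap C_n$ and $S^n=\bigcup_{k=0}^n S_k$ (the $n$-skeleton; $S^{-1}=\emptyset$); $S$ is $n$-dimensional when $S=S^n$. For $S,T\subseteq C$ write $S\perp T$ when $S^-\cap T^-=\emptyset$ and $S^+\cap T^+=\emptyset$; $x\perp y$ means $\{x\}\perp\{y\}$. A set $S$ is well-formed when $S_0$ has at most one element and for every $n>0$ and all distinct $x,y\in S_n$, $x\perp y$. Write $x<y$ when $x^+\cap y^-\neq\emptyset$, and let $\lhd$ be the reflexive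 transitive closure of $<$. Axioms: (1) for all $x$, $x^{++}\cup x^{--}=x^{-+}\cup x^{+-}$; (2) for all $x$, $x^-$ and $x^+$ are well-formed; (3A) $x\lhd y$ and $y\lhd x$ imply $x=y$; (3B) if $x\lhd y$ then there is no $z$ with $x\in z^+$ and $y\in z^-$, and no $z$ with $y\in z^+$ and $x\in z^-$. For $S,M,P\subseteq C$, $S$ moves $M$ to $P$ when $M=(P\cup S^-)\setminus S^+$ and $P=(M\cup S^+)\setminus S^-$. A cell is a pair $(M,P)$ of non-empty, well-formed, finite subsets of $C$ such that $M$ moves $M$ to $P$ and $P$ moves $M$ to $P$; it is an $n$-cell when $M\cup P$ is $n$-dimensional. A set $S\subseteq C$ is receptive when for all $x\in C$: if $x^{-+}\cap x^{++}\subseteq S$ and $S\cap x^{--}=\emptyset$ then $S\cap x^{+-}=\emptyset$; and if $x^{+-}\cap x^{--}\subseteq S$ and $S\cap x^{++}=\emptyset$ then $S\cap x^{-+}=\emptyset$. *)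

From Stdlib Require Import List Relations.

Set Implicit Arguments.

Section Sets.
Variable T : Type.
Definition subset (S U : T -> Prop) : Prop := forall x, S x -> U x.
Definition seteq (S U : T -> Prop) : Prop := forall x, S x <-> U x.
Definition setU (S U : T -> Prop) : T -> Prop := fun x => S x \/ U x.
Definition setI (S U : T -> Prop) : T -> Prop := fun x => S x /\ U x.
Definition setD (S U : T -> Prop) : T -> Prop := fun x => S x /\ ~ U x.
Definition set1 (a : T) : T -> Prop := fun x => x = a.
Definition finite (S : T -> Prop) : Prop :=
  exists l : list T, forall x, S x -> In x l.
Definition nonempty (S : T -> Prop) : Prop := exists x, S x.
Definition has_card (S : T -> Prop) (m : nat) : Prop :=
  exists l : list T, NoDup l /\ length l = m /\ forall x, S x <-> In x l.
End Sets.

Record PreComplex := {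
  carrier :> Type;
  dim : carrier -> nat;
  minus : carrier -> carrier -> Prop;   (* minus x y  <->  y \in x^- *)
  plus : carrier -> carrier -> Prop     (* plus x y   <->  y \in x^+ *)
}.
Arguments dim {p} _.
Arguments minus {p} _ _.
Arguments plus {p} _ _.

Section Ops.
Context {C : PreComplex}.
Implicit Types S M P X : C -> Prop.

Definition Sminus S : C -> Prop := fun y => exists w, S w /\ minus w y.
Definition Splus S : C -> Prop := fun y => exists w, S w /\ plus w y.
Definition Smp S : C -> Prop := setD (Sminus S) (Splus S).
Definition Spm S : C -> Prop := setD (Splus S) (Sminus S).
Definition layer S (n : nat) : C -> Prop := fun y => S y /\ dim y = n.
Definition skel S (n : nat) : C -> Prop := fun y => S y /\ dim y <= n.
(* S^{n-1} for n : nat, i.e. cells of dimension < n (empty when n = 0) *)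
Definition skel_pred S (n : nat) : C -> Prop := fun y => S y /\ dim y < n.
Definition ndimensional S (n : nat) : Prop := forall y, S y -> dim y <= n.

Definition perp S U : Prop :=
  (forall y, ~ (Sminus S y /\ Sminus U y)) /\
  (forall y, ~ (Splus S y /\ Splus U y)).

Definition well_formed S : Prop :=
  (forall x y, S x -> S y -> dim x = 0 -> dim y = 0 -> x = y) /\
  (forall n x y, 0 < n -> S x -> S y -> dim x = n -> dim y = n -> x <> y ->
     perp (set1 x) (set1 y)).

Definition ltc (x y : C) : Prop := exists z, plus x z /\ minus y z.
Definition lhd : C -> C -> Prop := clos_refl_trans C ltc.

Definition xm (x : C) : C -> Prop := minus x.
Definition xp (x : C) : C -> Prop := plus x.

Definition parity_axioms : Prop :=
  (forall x y : C, minus x y -> dim x = S (dim y)) /\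
  (forall x y : C, plus x y -> dim x = S (dim y)) /\
  (forall x y : C, ~ (minus x y /\ plus x y)) /\
  (forall x, 0 < dim x -> nonempty (xm x) /\ nonempty (xp x)) /\
  (forall x, finite (xm x) /\ finite (xp x)) /\
  (forall x, seteq (setU (Splus (xp x)) (Sminus (xm x)))
                   (setU (Splus (xm x)) (Sminus (xp x)))) /\
  (forall x, well_formed (xm x) /\ well_formed (xp x)) /\
  (forall x y, lhd x y -> lhd y x -> x = y) /\
  (forall x y, lhd x y ->
     (~ exists z, plus z x /\ minus z y) /\
     (~ exists z, plus z y /\ minus z x)).

Definition moves S M P : Prop :=
  seteq M (setD (setU P (Sminus S)) (Splus S)) /\
  seteq P (setD (setU M (Splus S)) (Sminus S)).

Definition cell M P : Prop :=
  nonempty M /\ nonempty P /\ well_formed M /\ well_formed P /\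
  finite M /\ finite P /\ moves M M P /\ moves P M P.

Definition ncell (n : nat) M P : Prop := cell M P /\ ndimensional (setU M P) n.

Definition receptive S : Prop :=
  forall x,
    (subset (setI (Splus (xm x)) (Splus (xp x))) S ->
       (forall y, ~ (S y /\ Sminus (xm x) y)) ->
       forall y, ~ (S y /\ Sminus (xp x) y)) /\
    (subset (setI (Sminus (xp x)) (Sminus (xm x))) S ->
       (forall y, ~ (S y /\ Splus (xp x) y)) ->
       forall y, ~ (S y /\ Splus (xm x) y)).
End Ops.

Record ParityComplex := {
  pc :> PreComplex;
  pc_axioms : @parity_axioms pc
}.

(* Part (B) is proved by induction on n, together with its special case of a single
   (n+1)-cell x. For a general X one removes a lhd-minimal x: the cell obtained from
   X \ {x} is an n-cell whose top layer contains x^+, and retracting it along x gives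
   the cell for X.

   For a single x in dimension k+1 the new top layer is Y = (M_{k+1} \ x^+) ∪ x^-, and
   everything reduces to showing that the interior x^{--} ∩ x^{-+} of x^- avoids M_k, P_k
   and the boundaries of M_{k+1}; then Y is well formed and moves M_k to P_k. For this,
   retract the target boundary of (M, P) along the lhd-upward closure V in M_{k+1} of x^+
   (possibly with one more cell); by induction this is a cell, and receptivity of its
   source at x shows that x^{-+} is covered by V^+, which axiom 3B forbids.

   Part (C) follows by stacking X on top: in dimension n-1 the cell equations come from
   the cell of (B) and from (M, P), and in dimension n from X moving Y to M_n = P_n. *)

From Stdlib Require Import List Relations Lia Classical PeanoNat.

Section FiniteSets.
Context {T : Type}.
Implicit Types V W : T -> Prop.

Lemma finite_subset {V W} : finite W -> subset V W -> finite V.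
Proof. intros [l Hl] HVW; exists l; auto. Qed.

Lemma finite_setU {V W} : finite V -> finite W -> finite (setU V W).
Proof.
  intros [l1 H1] [l2 H2]; exists (l1 ++ l2).
  intros x [h|h]; apply in_or_app; auto.
Qed.

Lemma In_remove_shorter (l : list T) (w : T) : In w l ->
  exists l', length l' < length l /\ forall e, In e l -> e <> w -> In e l'.
Proof.
  induction l as [|a l IH]; intros Hw; [destruct Hw|].
  destruct (classic (a = w)) as [<-|ne].
  - exists l; split; [simpl; lia|]. intros e [<-|he] ne; [congruence|exact he].
  - destruct Hw as [->|Hw]; [congruence|].
    destruct (IH Hw) as [l' [hlen Hl']].
    exists (a :: l'); split; [simpl; lia|].
    intros e [<-|he] ne'; [left|right]; auto.
Qed.

Lemma finite_ind (Q : (T -> Prop) -> Prop) :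
  (forall V, finite V -> (forall w, V w -> Q (setD V (set1 w))) -> Q V) ->
  forall V, finite V -> Q V.
Proof.
  intros step V [l Hl].
  assert (H : forall n l V, length l <= n -> (forall e, V e -> In e l) -> Q V).
  { induction n as [|n IH]; intros l' V' hlen HV'; apply step; try (exists l'; exact HV');
      intros w Vw; destruct (In_remove_shorter l' w (HV' w Vw)) as [l'' [hlen' Hl'']]; [lia|].
    apply (IH l''); [lia|]; intros e [Ve ne]; apply Hl''; auto. }
  exact (H _ l V (le_n _) Hl).
Qed.

Lemma finite_minimal (R : T -> T -> Prop) :
  (forall x y z, R x y -> R y z -> R x z) -> (forall x y, R x y -> R y x -> x = y) ->
  forall V, finite V -> nonempty V -> exists m, V m /\ forall e, V e -> R e m -> e = m.
Proof.
  intros Rtrans Rantisym.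
  apply (finite_ind (fun V => nonempty V -> exists m, V m /\ forall e, V e -> R e m -> e = m)).
  intros V _ IH [w Vw].
  destruct (classic (exists e, setD V (set1 w) e)) as [ne|emp].
  - destruct (IH w Vw ne) as [m [[Vm mw] mmin]].
    destruct (classic (R w m)) as [Rwm|nRwm].
    + exists w; split; [exact Vw|]. intros e Ve Rew.
      apply NNPP; intro new.
      assert (e = m) as -> by (apply mmin; [split|eapply Rtrans]; eauto).
      apply mw, Rantisym; assumption.
    + exists m; split; [exact Vm|]. intros e Ve Rem.
      destruct (classic (e = w)) as [->|new]; [contradiction|]. apply mmin; [split|]; assumption.
  - exists w; split; [exact Vw|]. intros e Ve _.
    apply NNPP; intro new. apply emp; exists e; split; assumption.
Qed.
End FiniteSets.

Section ParityComplexes.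
Variable C : ParityComplex.
Implicit Types (M P X D V K L : C -> Prop).

Lemma dim_minus {x y : C} : minus x y -> dim x = S (dim y).
Proof. destruct (pc_axioms C) as (H & _); exact (H x y). Qed.

Lemma dim_plus {x y : C} : plus x y -> dim x = S (dim y).
Proof. destruct (pc_axioms C) as (_ & H & _); exact (H x y). Qed.

Lemma minus_plus_disjoint {x y : C} : minus x y -> plus x y -> False.
Proof. destruct (pc_axioms C) as (_ & _ & H & _); intros; apply (H x y); split; assumption. Qed.

Lemma minus_nonempty (x : C) : 0 < dim x -> exists y, minus x y.
Proof. destruct (pc_axioms C) as (_ & _ & _ & H & _); intros hx; apply (H x hx). Qed.

Lemma plus_nonempty (x : C) : 0 < dim x -> exists y, plus x y.
Proof. destruct (pc_axioms C) as (_ & _ & _ & H & _); intros hx; apply (H x hx). Qed.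

Lemma minus_finite (x : C) : finite (xm x).
Proof. destruct (pc_axioms C) as (_ & _ & _ & _ & H & _); apply H. Qed.

Lemma axiom1 (x z : C) :
  Splus (xp x) z \/ Sminus (xm x) z <-> Splus (xm x) z \/ Sminus (xp x) z.
Proof. destruct (pc_axioms C) as (_ & _ & _ & _ & _ & H & _); apply H. Qed.

Lemma well_formed_minus (x : C) : well_formed (xm x).
Proof. destruct (pc_axioms C) as (_ & _ & _ & _ & _ & _ & H & _); apply H. Qed.

Lemma lhd_antisym {x y : C} : lhd x y -> lhd y x -> x = y.
Proof. destruct (pc_axioms C) as (_ & _ & _ & _ & _ & _ & _ & H & _); apply H. Qed.

Lemma not_lhd_plus_minus {x s u : C} : plus x s -> minus x u -> ~ lhd s u.
Proof.
  destruct (pc_axioms C) as (_ & _ & _ & _ & _ & _ & _ & _ & H).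
  intros hs hu hsu; apply (proj1 (H s u hsu)); exists x; split; assumption.
Qed.

Lemma not_lhd_minus_plus {x u v : C} : minus x u -> plus x v -> ~ lhd u v.
Proof.
  destruct (pc_axioms C) as (_ & _ & _ & _ & _ & _ & _ & _ & H).
  intros hu hv huv; apply (proj2 (H u v huv)); exists x; split; assumption.
Qed.

Lemma lhd_trans {x y z : C} : lhd x y -> lhd y z -> lhd x z.
Proof. apply rt_trans. Qed.

Lemma lhd_step {x y z : C} : plus x z -> minus y z -> lhd x y.
Proof. intros; apply rt_step; exists z; split; assumption. Qed.

Lemma finite_lhd_minimal {V} : finite V -> nonempty V ->
  exists m, V m /\ forall e, V e -> lhd e m -> e = m.
Proof. apply finite_minimal; [exact @lhd_trans | exact @lhd_antisym]. Qed.

Lemma finite_lhd_maximal {V} : finite V -> nonempty V ->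
  exists m, V m /\ forall e, V e -> lhd m e -> e = m.
Proof.
  apply (finite_minimal (fun a b => lhd b a)).
  - intros a b c hab hbc; exact (lhd_trans hbc hab).
  - intros a b hab hba; exact (lhd_antisym hba hab).
Qed.

Definition of_dim D (n : nat) : Prop := forall y, D y -> dim y = n.

Definition agree M M' (d : nat) : Prop := forall w, dim w = d -> (M w <-> M' w).

Lemma agree_seteq {M M'} d : seteq M M' -> agree M M' d.
Proof. intros H w _; apply H. Qed.

Lemma agree_trans {M1 M2 M3 d} : agree M1 M2 d -> agree M2 M3 d -> agree M1 M3 d.
Proof. intros H1 H2 w hw; rewrite (H1 w hw); apply H2, hw. Qed.

Lemma agree_sym {M M' d} : agree M M' d -> agree M' M d.
Proof. intros H w hw; symmetry; apply H, hw. Qed.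

Lemma agree_layer M d : agree M (layer M d) d.
Proof. intros w hw; unfold layer; tauto. Qed.

Lemma Sminus_agree {M M'} (z : C) : agree M M' (S (dim z)) -> (Sminus M z <-> Sminus M' z).
Proof.
  intros H; split; intros [w [hw hwz]]; exists w; split; try assumption;
    apply (H w (dim_minus hwz)); assumption.
Qed.

Lemma Splus_agree {M M'} (z : C) : agree M M' (S (dim z)) -> (Splus M z <-> Splus M' z).
Proof.
  intros H; split; intros [w [hw hwz]]; exists w; split; try assumption;
    apply (H w (dim_plus hwz)); assumption.
Qed.

Lemma Sminus_setU M M' (z : C) : Sminus (setU M M') z <-> Sminus M z \/ Sminus M' z.
Proof.
  split; [intros [w [[h|h] hz]]; [left|right]; exists w; auto|].
  intros [[w [h hz]]|[w [h hz]]]; exists w; split; auto; [left|right]; exact h.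
Qed.

Lemma Splus_setU M M' (z : C) : Splus (setU M M') z <-> Splus M z \/ Splus M' z.
Proof.
  split; [intros [w [[h|h] hz]]; [left|right]; exists w; auto|].
  intros [[w [h hz]]|[w [h hz]]]; exists w; split; auto; [left|right]; exact h.
Qed.

Lemma Sminus_set1 (x z : C) : Sminus (set1 x) z <-> minus x z.
Proof. split; [intros [w [-> h]]; exact h | intros h; exists x; split; [reflexivity|exact h]]. Qed.

Lemma Splus_set1 (x z : C) : Splus (set1 x) z <-> plus x z.
Proof. split; [intros [w [-> h]]; exact h | intros h; exists x; split; [reflexivity|exact h]]. Qed.

Lemma setU_setD1 {X} {w : C} : X w -> seteq X (setU (setD X (set1 w)) (set1 w)).
Proof.
  intros Xw e; unfold setU, setD, set1; split; [|intros [[h _]| ->]; assumption].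
  intros h; destruct (classic (e = w)); [right|left]; auto.
Qed.

Lemma Sminus_setD1 {X} {w} (z : C) : X w ->
  (Sminus X z <-> Sminus (setD X (set1 w)) z \/ minus w z).
Proof.
  intros Xw; rewrite (Sminus_agree z (agree_seteq _ (setU_setD1 Xw))), Sminus_setU, Sminus_set1.
  reflexivity.
Qed.

Lemma Splus_setD1 {X} {w} (z : C) : X w ->
  (Splus X z <-> Splus (setD X (set1 w)) z \/ plus w z).
Proof.
  intros Xw; rewrite (Splus_agree z (agree_seteq _ (setU_setD1 Xw))), Splus_setU, Splus_set1.
  reflexivity.
Qed.

Lemma well_formed_subset {M M'} : subset M' M -> well_formed M -> well_formed M'.
Proof.
  intros H [h0 h1]; split; [intros x y hx hy; apply h0|intros d x y hd hx hy; apply (h1 d)]; auto.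
Qed.

Lemma perp_sym {M M'} : perp M M' -> perp M' M.
Proof. intros [h1 h2]; split; intros y [a b]; [apply (h1 y)|apply (h2 y)]; split; assumption. Qed.

Lemma well_formed_eq_of_minus {M} {u v z : C} : well_formed M -> M u -> M v ->
  minus u z -> minus v z -> u = v.
Proof.
  intros [_ wf] hu hv huz hvz; apply NNPP; intro ne.
  assert (du := dim_minus huz); assert (dv := dim_minus hvz).
  destruct (wf (dim u) u v ltac:(lia) hu hv eq_refl ltac:(lia) ne) as [H _].
  apply (H z); split; apply Sminus_set1; assumption.
Qed.

Lemma well_formed_eq_of_plus {M} {u v z : C} : well_formed M -> M u -> M v ->
  plus u z -> plus v z -> u = v.
Proof.
  intros [_ wf] hu hv huz hvz; apply NNPP; intro ne.
  assert (du := dim_plus huz); assert (dv := dim_plus hvz).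
  destruct (wf (dim u) u v ltac:(lia) hu hv eq_refl ltac:(lia) ne) as [_ H].
  apply (H z); split; apply Splus_set1; assumption.
Qed.

Lemma well_formed_setU {M M'} : well_formed M -> well_formed M' ->
  (forall u v, M u -> M' v -> dim u = dim v -> u <> v -> 0 < dim u /\ perp (set1 u) (set1 v)) ->
  well_formed (setU M M').
Proof.
  intros [h0 h1] [h0' h1'] Hmix; split.
  - intros u v [hu|hu] [hv|hv] du dv; auto; apply NNPP; intro ne.
    + destruct (Hmix u v hu hv ltac:(lia) ne); lia.
    + destruct (Hmix v u hv hu ltac:(lia) (not_eq_sym ne)); lia.
  - intros d u v hd [hu|hu] [hv|hv] du dv ne; eauto.
    + exact (proj2 (Hmix u v hu hv ltac:(lia) ne)).
    + exact (perp_sym (proj2 (Hmix v u hv hu ltac:(lia) (not_eq_sym ne)))).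
Qed.

Lemma well_formed_setU_dims {M M'} : well_formed M -> well_formed M' ->
  (forall u v, M u -> M' v -> dim u <> dim v) -> well_formed (setU M M').
Proof.
  intros wM wM' H; apply well_formed_setU; auto.
  intros u v hu hv duv; exfalso; exact (H u v hu hv duv).
Qed.

Lemma Sminus_ndim {M n} (z : C) : ndimensional M n -> n <= dim z -> ~ Sminus M z.
Proof. intros H hz [w [hw hwz]]; assert (h1 := dim_minus hwz); assert (h2 := H w hw); lia. Qed.

Lemma Splus_ndim {M n} (z : C) : ndimensional M n -> n <= dim z -> ~ Splus M z.
Proof. intros H hz [w [hw hwz]]; assert (h1 := dim_plus hwz); assert (h2 := H w hw); lia. Qed.

Definition moves_at X M P (z : C) : Prop :=
  (M z <-> (P z \/ Sminus X z) /\ ~ Splus X z) /\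
  (P z <-> (M z \/ Splus X z) /\ ~ Sminus X z).

Lemma moves_at_of_moves {X M P} (z : C) : moves X M P -> moves_at X M P z.
Proof. intros [h1 h2]; split; [apply h1|apply h2]. Qed.

Lemma moves_at_agree {X X' M M' P P'} (z : C) :
  agree X X' (S (dim z)) -> agree M M' (dim z) -> agree P P' (dim z) ->
  moves_at X M P z -> moves_at X' M' P' z.
Proof.
  intros HX HM HP; unfold moves_at.
  rewrite <- (Sminus_agree z HX), <- (Splus_agree z HX), <- (HM z eq_refl), <- (HP z eq_refl).
  exact id.
Qed.

Lemma moves_at_of_iff X M P (z : C) : (forall w, X w -> dim w <> S (dim z)) ->
  (M z <-> P z) -> moves_at X M P z.
Proof.
  intros HX HMP.
  assert (~ Sminus X z) by (intros [w [hw hwz]]; exact (HX w hw (dim_minus hwz))).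
  assert (~ Splus X z) by (intros [w [hw hwz]]; exact (HX w hw (dim_plus hwz))).
  unfold moves_at; tauto.
Qed.

Lemma cell_intro K L : nonempty K -> nonempty L -> well_formed K -> well_formed L ->
  finite K -> finite L -> (forall z, moves_at K K L z /\ moves_at L K L z) -> cell K L.
Proof.
  intros nK nL wK wL fK fL Hm.
  repeat (split; [assumption|]).
  split; split; intro z; apply (Hm z).
Qed.

Lemma cell_moves_at {K L} (z : C) : cell K L -> moves_at K K L z /\ moves_at L K L z.
Proof. intros (_ & _ & _ & _ & _ & _ & h1 & h2); split; apply moves_at_of_moves; assumption. Qed.

Lemma cell_ext {K L K' L'} : seteq K K' -> seteq L L' -> cell K L -> cell K' L'.
Proof.
  intros HK HL hc.
  assert (hm := fun z => cell_moves_at z hc).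
  destruct hc as ([e he] & [e' he'] & wK & wL & fK & fL & _).
  apply cell_intro.
  - exists e; apply HK, he.
  - exists e'; apply HL, he'.
  - apply (well_formed_subset (fun y h => proj2 (HK y) h) wK).
  - apply (well_formed_subset (fun y h => proj2 (HL y) h) wL).
  - apply (finite_subset fK (fun y h => proj2 (HK y) h)).
  - apply (finite_subset fL (fun y h => proj2 (HL y) h)).
  - intro z; destruct (hm z) as [h1 h2]; split.
    + exact (moves_at_agree z (agree_seteq _ HK) (agree_seteq _ HK) (agree_seteq _ HL) h1).
    + exact (moves_at_agree z (agree_seteq _ HL) (agree_seteq _ HK) (agree_seteq _ HL) h2).
Qed.

Lemma ncell_top_layer {n M P} : ncell n M P -> seteq (layer M n) (layer P n).
Proof.
  intros [hc hdim] z; unfold layer.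
  destruct (classic (dim z = n)) as [hz|hz]; [|tauto].
  destruct (cell_moves_at z hc) as [[h _] _].
  assert (hM : ndimensional M n) by (intros w hw; apply hdim; left; exact hw).
  assert (~ Sminus M z) by (apply (Sminus_ndim z hM); lia).
  assert (~ Splus M z) by (apply (Splus_ndim z hM); lia).
  tauto.
Qed.

Definition splice M (n : nat) D : C -> Prop := setU (skel_pred M n) D.

Section Splice.
Variable M : C -> Prop.
Context {D : C -> Prop} {n : nat}.
Hypothesis HD : of_dim D n.

Lemma agree_splice_below d : d < n -> agree M (splice M n D) d.
Proof.
  intros hd w hw; unfold splice, setU, skel_pred.
  split; [intro h; left; split; [exact h|lia]|intros [[h _]|h]; [exact h|apply HD in h; lia]].
Qed.

Lemma agree_splice_at : agree D (splice M n D) n.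
Proof.
  intros w hw; unfold splice, setU, skel_pred; split; [tauto|intros [[_ h]|h]; [lia|exact h]].
Qed.

Lemma splice_above (z : C) : n <= dim z -> (splice M n D z <-> D z).
Proof.
  intros hz; unfold splice, setU, skel_pred; split; [intros [[_ h]|h]; [lia|exact h]|tauto].
Qed.

Lemma splice_ndim : ndimensional (splice M n D) n.
Proof. intros w [[_ h]|h]; [lia|rewrite (HD w h); lia]. Qed.

Lemma layer_splice : seteq (layer (splice M n D) n) D.
Proof.
  intros w; unfold layer; split; [intros [h hw]; apply (agree_splice_at w hw), h|].
  intros h; split; [right; exact h|exact (HD w h)].
Qed.

Lemma splice_splice E : seteq (splice (splice M n D) n E) (splice M n E).
Proof.
  intros w; unfold splice, setU, skel_pred.
  split; [intros [[[h|h] hw]|h]; auto; apply HD in h; lia|intros [[h hw]|h]; auto].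
Qed.

Lemma well_formed_splice : well_formed M -> well_formed D -> well_formed (splice M n D).
Proof.
  intros wM wD; apply well_formed_setU_dims; [|exact wD|].
  - apply (well_formed_subset (fun y h => proj1 h) wM).
  - intros u v [_ hu] hv; rewrite (HD v hv); lia.
Qed.

Lemma finite_splice : finite M -> finite D -> finite (splice M n D).
Proof. intros fM fD; apply finite_setU; [apply (finite_subset fM); intros y []; auto|exact fD]. Qed.
End Splice.

Lemma cell_splice M P D j : cell M P -> of_dim D j -> nonempty D -> well_formed D -> finite D ->
  (forall z, S (dim z) = j -> moves_at D M P z) ->
  cell (splice M j D) (splice P j D).
Proof.
  intros hc HD [d hd] wD fD HDj.
  assert (hm := fun z => cell_moves_at z hc).
  destruct hc as (_ & _ & wM & wP & fM & fP & _).
  apply cell_intro; try (exists d; right; exact hd);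
    try (apply well_formed_splice; assumption); try (apply finite_splice; assumption).
  intro z; destruct (Nat.lt_trichotomy (S (dim z)) j) as [lt|[eq|gt]].
  - destruct (hm z) as [h1 h2]; split; refine (moves_at_agree z _ _ _ _);
      try apply (agree_splice_below _ HD); try lia; assumption.
  - split; refine (moves_at_agree z _ _ _ (HDj z eq));
      first [rewrite eq; apply agree_splice_at | apply (agree_splice_below _ HD); lia].
  - split; apply moves_at_of_iff;
      try (intros w hw; assert (h := splice_ndim _ HD w hw); lia);
      rewrite (splice_above M), (splice_above P); lia || tauto.
Qed.

Lemma cell_extend n K1 L1 K2 L2 X :
  cell K1 L1 -> cell K2 L2 -> ndimensional K1 n -> ndimensional L2 n ->
  (forall d, d < n -> agree K1 K2 d /\ agree L1 L2 d) ->
  of_dim X (S n) -> well_formed X -> finite X ->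
  moves X (layer K1 n) (layer L2 n) ->
  cell (setU K1 X) (setU L2 X).
Proof.
  intros hc1 hc2 hK1 hL2 Hlow HX wX fX HXmoves.
  assert (low : forall M d, d <= n -> agree M (setU M X) d).
  { intros M d hd w hw; unfold setU; split; [tauto|intros [h|h]; [exact h|apply HX in h; lia]]. }
  assert (top : forall M, ndimensional M n -> agree X (setU M X) (S n)).
  { intros M hM w hw; unfold setU; split; [tauto|intros [h|h]; [apply hM in h; lia|exact h]]. }
  assert (hm1 := fun z => proj1 (cell_moves_at z hc1)).
  assert (hm2 := fun z => proj2 (cell_moves_at z hc2)).
  destruct hc1 as ([e he] & _ & wK1 & _ & fK1 & _).
  destruct hc2 as (_ & [e' he'] & _ & wL2 & _ & fL2 & _).
  apply cell_intro; try (apply finite_setU; assumption).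
  - exists e; left; exact he.
  - exists e'; left; exact he'.
  - apply well_formed_setU_dims; auto.
    intros u v hu hv; rewrite (HX v hv); assert (h := hK1 u hu); lia.
  - apply well_formed_setU_dims; auto.
    intros u v hu hv; rewrite (HX v hv); assert (h := hL2 u hu); lia.
  - intro z; destruct (Nat.lt_trichotomy (dim z) n) as [lt|[eq|gt]].
    + destruct (Hlow (dim z) lt) as [hK hL]; split.
      * exact (moves_at_agree z (low K1 _ lt) (low K1 (dim z) ltac:(lia))
                 (agree_trans hL (low L2 (dim z) ltac:(lia))) (hm1 z)).
      * exact (moves_at_agree z (low L2 _ lt)
                 (agree_trans (agree_sym hK) (low K1 (dim z) ltac:(lia)))
                 (low L2 (dim z) ltac:(lia)) (hm2 z)).
    + assert (hz := moves_at_of_moves z HXmoves).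
      subst n; split; refine (moves_at_agree z _ _ _ hz);
        first [ apply top; assumption
              | refine (agree_trans (agree_sym (agree_layer _ _)) (low _ _ _)); lia ].
    + split; apply moves_at_of_iff.
      1: intros w [h|h]; [assert (hw := hK1 w h) | rewrite (HX w h)]; lia.
      2: intros w [h|h]; [assert (hw := hL2 w h) | rewrite (HX w h)]; lia.
      all: unfold setU; assert (~ K1 z) by (intro h; assert (hz := hK1 z h); lia);
        assert (~ L2 z) by (intro h; assert (hz := hL2 z h); lia); tauto.
Qed.

Lemma splice_seteq M n D D' : seteq D D' -> seteq (splice M n D) (splice M n D').
Proof. intros H z; unfold splice, setU; rewrite (H z); reflexivity. Qed.

Lemma ncell_splice {M P D n} : of_dim D n -> cell (splice M n D) (splice P n D) ->
  ncell n (splice M n D) (splice P n D).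
Proof. intros HD hc; split; [exact hc|intros y [h|h]; exact (splice_ndim _ HD y h)]. Qed.

Lemma ncell_splice_top {n M P} : ncell n M P ->
  seteq M (splice M n (layer M n)) /\ seteq P (splice P n (layer M n)).
Proof.
  intros HMP; assert (Htop := ncell_top_layer HMP); destruct HMP as [_ hdim].
  assert (hM : forall z, M z -> dim z <= n) by (intros z h; apply hdim; left; exact h).
  assert (hP : forall z, P z -> dim z <= n) by (intros z h; apply hdim; right; exact h).
  split; intro z; unfold splice, setU, skel_pred; [|rewrite (Htop z)]; unfold layer;
    (split; [|tauto]); intro h; destruct (Nat.eq_dec (dim z) n); [right|left|right|left];
    split; auto; first [assert (hz := hM z h) | assert (hz := hP z h)]; lia.
Qed.

Definition retract L X : C -> Prop := setD (setU L (Sminus X)) (Splus X).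

Lemma retractE L X (z : C) : retract L X z <-> (L z \/ Sminus X z) /\ ~ Splus X z.
Proof. reflexivity. Qed.

Lemma retract_seteq L L' X : seteq L L' -> seteq (retract L X) (retract L' X).
Proof. intros H z; unfold retract, setD, setU; rewrite (H z); reflexivity. Qed.

Lemma retract_empty L X : (forall e, ~ X e) -> seteq (retract L X) L.
Proof.
  intros H z; unfold retract, setD, setU.
  assert (~ Sminus X z) by (intros [w [hw _]]; exact (H w hw)).
  assert (~ Splus X z) by (intros [w [hw _]]; exact (H w hw)).
  tauto.
Qed.

Lemma of_dim_retract L X n : of_dim L n -> of_dim X (S n) -> of_dim (retract L X) n.
Proof.
  intros HL HX y [[h|[w [hw hwy]]] _]; [exact (HL y h)|].
  assert (h := dim_minus hwy); rewrite (HX w hw) in h; lia.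
Qed.

Lemma retract_setD1 L X (w : C) : X w ->
  (forall z, minus w z -> ~ Splus (setD X (set1 w)) z) ->
  seteq (retract (retract L (setD X (set1 w))) (set1 w)) (retract L X).
Proof.
  intros Xw Hmin z.
  rewrite !retractE, Sminus_set1, Splus_set1, (Sminus_setD1 z Xw), (Splus_setD1 z Xw).
  specialize (Hmin z); tauto.
Qed.

Lemma cell_splice_retract {M P D X n} : of_dim D n ->
  cell (splice (splice M n D) n (retract (layer (splice M n D) n) X))
       (splice (splice P n D) n (retract (layer (splice M n D) n) X)) ->
  cell (splice M n (retract D X)) (splice P n (retract D X)).
Proof.
  intros HD; apply cell_ext; intro z; rewrite (splice_splice _ HD _ z);
    apply splice_seteq, retract_seteq, layer_splice, HD.
Qed.

Definition retract_property (n : nat) : Prop :=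
  forall M P X, ncell n M P -> of_dim X (S n) -> well_formed X -> finite X ->
  subset (Spm X) (layer M n) ->
  cell (splice M n (retract (layer M n) X)) (splice P n (retract (layer M n) X)) /\
  (forall y, ~ (Sminus X y /\ layer M n y)).

Definition single_retract_property (n : nat) : Prop :=
  forall M P (x : C), ncell n M P -> dim x = S n -> subset (xp x) (layer M n) ->
  cell (splice M n (retract (layer M n) (set1 x))) (splice P n (retract (layer M n) (set1 x))) /\
  (forall y, ~ (minus x y /\ layer M n y)).

Lemma single_on_splice {n M P D} {x : C} : single_retract_property n ->
  of_dim D n -> cell (splice M n D) (splice P n D) -> dim x = S n -> subset (xp x) D ->
  cell (splice M n (retract D (set1 x))) (splice P n (retract D (set1 x))) /\
  (forall y, ~ (minus x y /\ D y)).
Proof.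
  intros Hs HD hc hx hxD.
  assert (hxD' : subset (xp x) (layer (splice M n D) n))
    by (intros z hz; apply (layer_splice M HD z), hxD, hz).
  destruct (Hs _ _ x (ncell_splice HD hc) hx hxD') as [hc' hd'].
  split; [exact (cell_splice_retract HD hc')|].
  intros y [hy hDy]; apply (hd' y); split; [exact hy|apply (layer_splice M HD y), hDy].
Qed.

Lemma Spm_setD1 X (x : C) : X x -> (forall z, minus x z -> ~ Splus (setD X (set1 x)) z) ->
  subset (Spm (setD X (set1 x))) (Spm X).
Proof.
  intros Xx Hmin z [hp hm]; split.
  - destruct hp as [e [[Xe _] h]]; exists e; split; assumption.
  - rewrite (Sminus_setD1 z Xx); intros [h|h]; [exact (hm h)|exact (Hmin z h hp)].
Qed.

Lemma retract_empty_cell {n M P X} : ncell n M P -> (forall e, ~ X e) ->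
  cell (splice M n (retract (layer M n) X)) (splice P n (retract (layer M n) X)) /\
  (forall y, ~ (Sminus X y /\ layer M n y)).
Proof.
  intros HMP emp; assert (HY := retract_empty (layer M n) X emp).
  destruct (ncell_splice_top HMP) as [hM hP]; split.
  - refine (cell_ext _ _ (proj1 HMP)); intro z;
      [rewrite (hM z)|rewrite (hP z)]; symmetry; apply splice_seteq, HY.
  - intros y [[w [hw _]] _]; exact (emp w hw).
Qed.

Lemma retract_add_minimal {n M P X} {x : C} : single_retract_property n -> ncell n M P ->
  of_dim X (S n) -> well_formed X -> subset (Spm X) (layer M n) -> X x ->
  (forall z, minus x z -> ~ Splus (setD X (set1 x)) z) ->
  cell (splice M n (retract (layer M n) (setD X (set1 x))))
       (splice P n (retract (layer M n) (setD X (set1 x)))) ->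
  (forall y, ~ (Sminus (setD X (set1 x)) y /\ layer M n y)) ->
  cell (splice M n (retract (layer M n) X)) (splice P n (retract (layer M n) X)) /\
  (forall y, ~ (Sminus X y /\ layer M n y)).
Proof.
  intros Hs HMP HX wX Hpm Xx Hmin hc' hd'.
  assert (HY' : of_dim (retract (layer M n) (setD X (set1 x))) n).
  { apply of_dim_retract; [intros y []; auto|intros y [h _]; exact (HX y h)]. }
  assert (hxY' : subset (xp x) (retract (layer M n) (setD X (set1 x)))).
  { intros z hz; split.
    - destruct (classic (Sminus X z)) as [h|h].
      + right; rewrite (Sminus_setD1 z Xx) in h.
        destruct h as [h|h]; [exact h|destruct (minus_plus_disjoint h hz)].
      + left; apply Hpm; split; [exists x; split; assumption|exact h].
    - intros [e [[Xe ne] hez]]; exact (ne (well_formed_eq_of_plus wX Xe Xx hez hz)). }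
  destruct (single_on_splice Hs HY' hc' (HX x Xx) hxY') as [hc hd]; split.
  - refine (cell_ext _ _ hc); apply splice_seteq, retract_setD1; assumption.
  - intros y [hy hMy]; rewrite (Sminus_setD1 y Xx) in hy.
    destruct hy as [hy|hy]; [exact (hd' y (conj hy hMy))|].
    apply (hd y); split; [exact hy|split; [left; exact hMy|exact (Hmin y hy)]].
Qed.

Lemma retract_of_single n : single_retract_property n -> retract_property n.
Proof.
  intros Hs M P X HMP HX wX fX; revert X fX HX wX.
  apply (finite_ind (fun X => of_dim X (S n) -> well_formed X -> subset (Spm X) (layer M n) ->
    cell (splice M n (retract (layer M n) X)) (splice P n (retract (layer M n) X)) /\
    (forall y, ~ (Sminus X y /\ layer M n y)))).
  intros X fX IH HX wX Hpm.
  destruct (classic (nonempty X)) as [ne|emp];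
    [|exact (retract_empty_cell HMP (fun e h => emp (ex_intro _ e h)))].
  destruct (finite_lhd_minimal fX ne) as [x [Xx xmin]].
  assert (Hmin : forall z, minus x z -> ~ Splus (setD X (set1 x)) z).
  { intros z hz [e [[Xe ne'] hez]]; exact (ne' (xmin e Xe (lhd_step hez hz))). }
  destruct (IH x Xx (fun e h => HX e (proj1 h)) (well_formed_subset (fun e h => proj1 h) wX)
              (fun z h => Hpm z (Spm_setD1 X x Xx Hmin z h))) as [hc' hd'].
  exact (retract_add_minimal Hs HMP HX wX Hpm Xx Hmin hc' hd').
Qed.

Lemma single_retract_0 : single_retract_property 0.
Proof.
  intros M P x HMP hx hxp.
  destruct (plus_nonempty x ltac:(lia)) as [p hp].
  assert (Hp : forall u, layer M 0 u -> u = p).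
  { intros u [hu du]; destruct HMP as [(_ & _ & [wM _] & _) _].
    destruct (hxp p hp) as [Mp dp]; exact (wM u p hu Mp du dp). }
  assert (hY : subset (retract (layer M 0) (set1 x)) (xm x)).
  { intros u [[hu|hu] hnp]; [|apply Sminus_set1, hu].
    exfalso; apply hnp, Splus_set1; rewrite (Hp u hu); exact hp. }
  split.
  - apply cell_splice; [apply HMP| | | | |intros z hz; lia].
    + intros y hy; assert (h := dim_minus (hY y hy)); lia.
    + destruct (minus_nonempty x ltac:(lia)) as [y hy]; exists y; split.
      * right; apply Sminus_set1, hy.
      * intro h; apply Splus_set1 in h; exact (minus_plus_disjoint hy h).
    + exact (well_formed_subset hY (well_formed_minus x)).
    + exact (finite_subset (minus_finite x) hY).
  - intros y [hy hMy]; rewrite (Hp y hMy) in hy; exact (minus_plus_disjoint hy hp).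
Qed.

Lemma cell_moves_at_layer {M P} k (z : C) : cell M P -> dim z = k ->
  moves_at (layer M (S k)) M P z.
Proof.
  intros hc hz; refine (moves_at_agree z _ (fun w _ => iff_refl _) (fun w _ => iff_refl _)
    (proj1 (cell_moves_at z hc))); rewrite hz; apply agree_layer.
Qed.

Lemma ncell_layer_nonempty {k M P} : ncell (S k) M P ->
  nonempty (layer M (S k)) -> nonempty (layer P k).
Proof.
  intros [hc _] hA.
  assert (fA : finite (layer M (S k))).
  { destruct hc as (_ & _ & _ & _ & fM & _); exact (finite_subset fM (fun y h => proj1 h)). }
  destruct (finite_lhd_maximal fA hA) as [m [[Mm dm] mmax]].
  destruct (plus_nonempty m ltac:(lia)) as [z hz].
  assert (dz : dim z = k) by (assert (h := dim_plus hz); lia).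
  exists z; split; [|exact dz].
  apply (cell_moves_at_layer k z hc dz); split; [right; exists m; split; [split|]; assumption|].
  intros [e [[Me de] hez]].
  assert (e = m) as -> by (apply mmax; [split; assumption|exact (lhd_step hz hez)]).
  exact (minus_plus_disjoint hez hz).
Qed.

Lemma cell_target_boundary {M P} k : cell M P -> nonempty (layer P k) ->
  cell (splice M k (layer P k)) (splice P k (layer P k)).
Proof.
  intros hc hne; apply cell_splice; [exact hc|intros y []; auto|exact hne| | |].
  - destruct hc as (_ & _ & _ & wP & _); exact (well_formed_subset (fun y h => proj1 h) wP).
  - destruct hc as (_ & _ & _ & _ & _ & fP & _); exact (finite_subset fP (fun y h => proj1 h)).
  - intros z hz; refine (moves_at_agree z _ (fun w _ => iff_refl _) (fun w _ => iff_refl _)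
      (proj2 (cell_moves_at z hc))); rewrite hz; apply agree_layer.
Qed.

Definition upclosed V A : Prop := forall e e', V e -> A e' -> ltc e e' -> V e'.

Definition upset A U : C -> Prop := fun e => A e /\ exists s, U s /\ lhd s e.

Lemma upset_upclosed A U : upclosed (upset A U) A.
Proof.
  intros e e' [_ [s [hs hse]]] he' hee'; split; [exact he'|].
  exists s; split; [exact hs|exact (lhd_trans hse (rt_step _ _ _ _ hee'))].
Qed.

Lemma Spm_upclosed {k M P V} : ncell (S k) M P -> subset V (layer M (S k)) ->
  upclosed V (layer M (S k)) -> subset (Spm V) (layer P k).
Proof.
  intros [hc _] HV Hup z [[w [Vw hwz]] hnm].
  assert (dz : dim z = k) by (destruct (HV w Vw) as [_ dw]; assert (h := dim_plus hwz); lia).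
  split; [|exact dz].
  apply (cell_moves_at_layer k z hc dz); split; [right; exists w; split; [apply HV|]; assumption|].
  intros [e [Ae hez]]; apply hnm; exists e; split; [|exact hez].
  apply (Hup w e Vw Ae); exists z; split; assumption.
Qed.

Section SingleStep.
Variable k : nat.
Hypothesis Hrec : forall M' P' : C -> Prop, cell M' P' -> receptive M' /\ receptive P'.
Hypothesis HB : retract_property k.
Variables (M P : C -> Prop) (x : C).
Hypothesis HMP : ncell (S k) M P.
Hypothesis Hx : dim x = S (S k).
Hypothesis Hxp : subset (xp x) (layer M (S k)).

Local Notation A := (layer M (S k)).

Lemma well_formed_source_layer : well_formed A.
Proof.
  destruct HMP as [(_ & _ & wM & _) _]; exact (well_formed_subset (fun y h => proj1 h) wM).
Qed.

Lemma finite_source_layer : finite A.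
Proof.
  destruct HMP as [(_ & _ & _ & _ & fM & _) _]; exact (finite_subset fM (fun y h => proj1 h)).
Qed.

(* Receptivity of the source of the target boundary of (M, P), retracted along
   [upset A U]: it contains x^{+-} ∩ x^{--} and misses x^{++}, so it misses x^{-+}. *)
Lemma upset_plus_closed U : subset (xp x) U -> subset U A ->
  (forall z, Sminus (xp x) z -> Sminus (xm x) z -> ~ Splus (upset A U) z) ->
  forall z, Splus (xm x) z -> layer P k z \/ Sminus (upset A U) z -> Splus (upset A U) z.
Proof.
  intros HxU HUA Hside z hb hz; apply NNPP; intro hnV.
  assert (HV : subset (upset A U) A) by (intros e h; exact (proj1 h)).
  assert (HxV : subset (xp x) (upset A U)).
  { intros s hs; split; [exact (Hxp s hs)|exists s; split; [exact (HxU s hs)|apply rt_refl]]. }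
  assert (hne : nonempty A)
    by (destruct (plus_nonempty x ltac:(lia)) as [s hs]; exists s; exact (Hxp s hs)).
  assert (hbd := cell_target_boundary k (proj1 HMP) (ncell_layer_nonempty HMP hne)).
  assert (HPk : of_dim (layer P k) k) by (intros y []; auto).
  destruct (HB _ _ (upset A U) (ncell_splice HPk hbd)) as [hc _].
  - intros y h; apply (HV y h).
  - exact (well_formed_subset HV well_formed_source_layer).
  - exact (finite_subset finite_source_layer HV).
  - intros y hy; apply (layer_splice M HPk y), (Spm_upclosed HMP HV (upset_upclosed A U)), hy.
  - apply (cell_splice_retract HPk) in hc.
    destruct (proj1 (Hrec _ _ hc) x) as [_ Hrecep].
    refine (Hrecep _ _ z (conj (or_intror (conj hz hnV)) hb)).
    + intros y [hc' ha]; right; split; [right|exact (Hside y hc' ha)].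
      destruct hc' as [v [hv hvy]]; exists v; split; [exact (HxV v hv)|exact hvy].
    + intros y [[[_ hy]|[_ hy]] [v [hv hvy]]].
      * destruct (Hxp v hv) as [_ dv]; assert (h := dim_plus hvy); lia.
      * exact (hy (ex_intro _ v (conj (HxV v hv) hvy))).
Qed.

Lemma Sminus_xm_not_plus_above {z e s : C} :
  Sminus (xm x) z -> xp x s -> lhd s e -> ~ plus e z.
Proof.
  intros [u [hu huz]] hs hse hez.
  exact (not_lhd_plus_minus hs hu (lhd_trans hse (lhd_step hez huz))).
Qed.

Lemma interior_xm_not_target {z : C} :
  Sminus (xm x) z -> Splus (xm x) z -> ~ layer P k z.
Proof.
  intros ha hb hPz.
  destruct (upset_plus_closed (xp x) (fun s h => h) Hxp) with z as [e [[_ [s [hs hse]]] hez]];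
    [|exact hb|left; exact hPz|exact (Sminus_xm_not_plus_above ha hs hse hez)].
  intros z' _ ha' [e [[_ [s [hs hse]]] hez]]; exact (Sminus_xm_not_plus_above ha' hs hse hez).
Qed.

Lemma interior_xm_not_Sminus_source {z : C} :
  Sminus (xm x) z -> Splus (xm x) z -> ~ Sminus A z.
Proof.
  intros ha [u [hu huz]] [w [Aw hwz]].
  assert (huw := lhd_step huz hwz).
  destruct (upset_plus_closed (setU (xp x) (set1 w))) with z
    as [e [[_ [s [[hs| ->] hse]]] hez]].
  - intros s hs; left; exact hs.
  - intros s [hs| ->]; [exact (Hxp s hs)|exact Aw].
  - intros z' [v [hv hvz]] ha' [e [[_ [s [[hs| ->] hse]]] hez]].
    + exact (Sminus_xm_not_plus_above ha' hs hse hez).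
    + exact (not_lhd_minus_plus hu hv (lhd_trans huw (lhd_trans hse (lhd_step hez hvz)))).
  - exists u; split; assumption.
  - right; exists w; split; [|exact hwz].
    split; [exact Aw|exists w; split; [right; reflexivity|apply rt_refl]].
  - exact (Sminus_xm_not_plus_above ha hs hse hez).
  - assert (e = w) as -> by exact (lhd_antisym (lhd_step hez hwz) hse).
    exact (minus_plus_disjoint hwz hez).
Qed.

Lemma interior_xm_not_Splus_source {z : C} :
  Sminus (xm x) z -> Splus (xm x) z -> ~ Splus A z.
Proof.
  intros ha hb hAp.
  assert (dz : dim z = k) by (destruct hAp as [w [[_ dw] hwz]]; assert (h := dim_plus hwz); lia).
  destruct (classic (Sminus A z)) as [hAm|hAm]; [exact (interior_xm_not_Sminus_source ha hb hAm)|].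
  apply (interior_xm_not_target ha hb); split; [|exact dz].
  apply (cell_moves_at_layer k z (proj1 HMP) dz); tauto.
Qed.

Lemma interior_xm_not_source {z : C} :
  Sminus (xm x) z -> Splus (xm x) z -> ~ layer M k z.
Proof.
  intros ha hb [hMz dz].
  apply (cell_moves_at_layer k z (proj1 HMP) dz) in hMz as [[hPz|hAm] _].
  - exact (interior_xm_not_target ha hb (conj hPz dz)).
  - exact (interior_xm_not_Sminus_source ha hb hAm).
Qed.

Lemma source_perp_xm {u v : C} : A u -> ~ xp x u -> xm x v -> perp (set1 u) (set1 v).
Proof.
  intros Au hu hv; split; intros z [h1 h2];
    [apply Sminus_set1 in h1, h2|apply Splus_set1 in h1, h2]; apply hu.
  - assert (ha : Sminus (xm x) z) by (exists v; split; assumption).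
    destruct (classic (Splus (xm x) z)) as [hb|hb].
    + destruct (interior_xm_not_Sminus_source ha hb (ex_intro _ u (conj Au h1))).
    + assert (hc : Sminus (xp x) z) by (destruct (axiom1 x z); tauto).
      destruct hc as [v' [hv' hv'z]].
      rewrite (well_formed_eq_of_minus well_formed_source_layer Au (Hxp v' hv') h1 hv'z); exact hv'.
  - assert (hb : Splus (xm x) z) by (exists v; split; assumption).
    destruct (classic (Sminus (xm x) z)) as [ha|ha].
    + destruct (interior_xm_not_Splus_source ha hb (ex_intro _ u (conj Au h1))).
    + assert (hd : Splus (xp x) z) by (destruct (axiom1 x z); tauto).
      destruct hd as [v' [hv' hv'z]].
      rewrite (well_formed_eq_of_plus well_formed_source_layer Au (Hxp v' hv') h1 hv'z); exact hv'.
Qed.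

Lemma xm_source_disjoint (y : C) : ~ (minus x y /\ A y).
Proof.
  intros [hy Ay].
  destruct (minus_nonempty y ltac:(destruct Ay; lia)) as [z hz].
  apply (proj1 (source_perp_xm Ay (minus_plus_disjoint hy) hy) z).
  split; apply Sminus_set1; exact hz.
Qed.

Lemma retract_source_split :
  seteq (retract A (set1 x)) (setU (setD A (xp x)) (xm x)).
Proof.
  intro z; rewrite retractE, Sminus_set1, Splus_set1; unfold setU, setD, xm, xp.
  split; [tauto|intros [[h1 h2]|h]; split; auto; intro h'; exact (minus_plus_disjoint h h')].
Qed.

Lemma retract_source_moves_at (z : C) : dim z = k -> moves_at (retract A (set1 x)) M P z.
Proof.
  intros dz.
  assert (eA : seteq A (setU (setD A (xp x)) (xp x))).
  { intro e; unfold setU, setD; split; [intro h; destruct (classic (xp x e)); tauto|].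
    intros [[h _]|h]; [exact h|exact (Hxp e h)]. }
  assert (eY := retract_source_split).
  assert (hYm := Sminus_agree z (agree_seteq (S (dim z)) eY)); rewrite Sminus_setU in hYm.
  assert (hYp := Splus_agree z (agree_seteq (S (dim z)) eY)); rewrite Splus_setU in hYp.
  assert (hAm := Sminus_agree z (agree_seteq (S (dim z)) eA)); rewrite Sminus_setU in hAm.
  assert (hAp := Splus_agree z (agree_seteq (S (dim z)) eA)); rewrite Splus_setU in hAp.
  assert (wf_minus : ~ (Sminus (setD A (xp x)) z /\ Sminus (xp x) z)).
  { intros [[u [[Au nu] huz]] [v [hv hvz]]]; apply nu.
    rewrite (well_formed_eq_of_minus well_formed_source_layer Au (Hxp v hv) huz hvz); exact hv. }
  assert (wf_plus : ~ (Splus (setD A (xp x)) z /\ Splus (xp x) z)).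
  { intros [[u [[Au nu] huz]] [v [hv hvz]]]; apply nu.
    rewrite (well_formed_eq_of_plus well_formed_source_layer Au (Hxp v hv) huz hvz); exact hv. }
  assert (ax3B_mp : ~ (Sminus (xm x) z /\ Splus (xp x) z)).
  { intros [[u [hu huz]] [v [hv hvz]]]; exact (not_lhd_plus_minus hv hu (lhd_step hvz huz)). }
  assert (ax3B_pm : ~ (Splus (xm x) z /\ Sminus (xp x) z)).
  { intros [[u [hu huz]] [v [hv hvz]]]; exact (not_lhd_minus_plus hu hv (lhd_step huz hvz)). }
  assert (ax1 := axiom1 x z).
  assert (not_target := fun ha hb hPz => interior_xm_not_target ha hb (conj hPz dz)).
  assert (not_source := fun ha hb hMz => interior_xm_not_source ha hb (conj hMz dz)).
  assert (hm := cell_moves_at_layer k z (proj1 HMP) dz).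
  unfold moves_at in *; rewrite hYm, hYp; rewrite hAm, hAp in hm.
  clear -hm wf_minus wf_plus ax3B_mp ax3B_pm ax1 not_target not_source; tauto.
Qed.

Lemma cell_retract_source :
  cell (splice M (S k) (retract A (set1 x))) (splice P (S k) (retract A (set1 x))).
Proof.
  assert (eY := retract_source_split).
  apply cell_splice; [exact (proj1 HMP)| | | | |intros z hz; apply retract_source_moves_at; lia].
  - apply of_dim_retract; [intros y []; auto|intros y ->; exact Hx].
  - destruct (minus_nonempty x ltac:(lia)) as [y hy]; exists y; apply eY; right; exact hy.
  - refine (well_formed_subset (fun y h => proj1 (eY y) h) (well_formed_setU _ _ _)).
    + exact (well_formed_subset (fun y h => proj1 h) well_formed_source_layer).
    + exact (well_formed_minus x).
    + intros u v [Au nu] hv _ _; split; [destruct Au; lia|exact (source_perp_xm Au nu hv)].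
  - refine (finite_subset (finite_setU _ (minus_finite x)) (fun y h => proj1 (eY y) h)).
    exact (finite_subset finite_source_layer (fun y h => proj1 h)).
Qed.
End SingleStep.

Lemma single_retract_step k :
  (forall M' P' : C -> Prop, cell M' P' -> receptive M' /\ receptive P') ->
  retract_property k -> single_retract_property (S k).
Proof.
  intros Hrec HB M P x HMP Hx Hxp; split.
  - exact (cell_retract_source k Hrec HB M P x HMP Hx Hxp).
  - exact (xm_source_disjoint k Hrec HB M P x HMP Hx Hxp).
Qed.

Lemma retract_property_all :
  (forall M' P' : C -> Prop, cell M' P' -> receptive M' /\ receptive P') ->
  forall n, retract_property n.
Proof.
  intros Hrec n; induction n as [|k IH]; apply retract_of_single;
    [exact single_retract_0|exact (single_retract_step k Hrec IH)].
Qed.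

Lemma cell_retract_extend {n M P X} : ncell n M P -> of_dim X (S n) -> well_formed X -> finite X ->
  subset (Spm X) (layer M n) ->
  cell (splice M n (retract (layer M n) X)) (splice P n (retract (layer M n) X)) ->
  (forall y, ~ (Sminus X y /\ layer M n y)) ->
  cell (setU (splice M n (retract (layer M n) X)) X) (setU P X).
Proof.
  intros HMP HX wX fX Hpm hc Hdisj.
  assert (HY : of_dim (retract (layer M n) X) n)
    by (apply of_dim_retract; [intros y []; auto|exact HX]).
  assert (Htop := ncell_top_layer HMP).
  apply (cell_extend n _ _ _ _ _ hc (proj1 HMP)); try assumption.
  - exact (splice_ndim _ HY).
  - intros y h; apply (proj2 HMP); right; exact h.
  - intros d hd; split; apply agree_sym, (agree_splice_below _ HY d hd).
  - split; intro z; unfold setD, setU; rewrite (layer_splice M HY z), <- (Htop z), retractE;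
      specialize (Hdisj z); specialize (Hpm z); unfold Spm, setD in Hpm; tauto.
Qed.
End ParityComplexes.

Theorem lemma3p2 (C : ParityComplex)
  (Hrec : forall M' P' : C -> Prop, cell M' P' -> receptive M' /\ receptive P')
  (m n : nat) (M P X : C -> Prop)
  (HMP : ncell n M P)
  (HXdim : forall x, X x -> dim x = S n)
  (HXwf : well_formed X)
  (HXcard : has_card X m)
  (HXpm : subset (Spm X) (layer M n)) :
  let Y := setD (setU (layer M n) (Sminus X)) (Splus X) in
  (cell (setU (skel_pred M n) Y) (setU (skel_pred P n) Y) /\
   (forall y, ~ (Sminus X y /\ layer M n y))) /\
  cell (setU (setU (skel_pred M n) Y) X) (setU P X).
Proof.
  intros Y.
  assert (fX : finite X)
    by (destruct HXcard as [l [_ [_ Hl]]]; exists l; intros x hx; apply Hl, hx).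
  destruct (retract_property_all C Hrec n M P X HMP HXdim HXwf fX HXpm) as [hB hdisj].
  split; [split; assumption|].
  exact (cell_retract_extend C HMP HXdim HXwf fX HXpm hB hdisj).
Qed.
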